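(* Let $\beta>0$, $k>0$, $u_0<0$, $\Phi(u)=\beta\left(-\frac{u^4}{4}+\frac{k+u_0}{3}u^3-\frac{ku_0}{2}u^2\right)$, and let $\delta$ be the involution defined in the context. Then (i) if $-k<u_0<0$, $u+\delta(u)<0$ for all $u\in(0,u_1)$; (ii) if $u_0<-k$, $u+\delta(u)>0$ for all $u\in(0,k)$.
   Context: Case $-k<u_0<0$: $u_1$ is the unique point of $(0,k)$ with $\Phi(u_1)=\Phi(u_0)$, and for $u\in(0,u_1)$, $\delta(u)$ is the unique $w\in(u_0,0)$ with $\Phi(w)=\Phi(u)$. Case $u_0<-k$: $w_2$ is the unique point of $(u_0,0)$ with $\Phi(w_2)=\Phi(k)$, and for $u\in(0,k)$, $\delta(u)$ is the unique $w\in(w_2,0)$ with $\Phi(w)=\Phi(u)$. *)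

From Stdlib Require Import Reals.
Open Scope R_scope.

Definition Phi (beta k u0 u : R) : R :=
  beta * (- (u ^ 4) / 4 + (k + u0) / 3 * u ^ 3 - k * u0 / 2 * u ^ 2).

(* Phi' (u) = -beta u (u - k) (u - u0), so Phi increases on (0, k) and decreases on (u0, 0),
   while Phi u - Phi (-u) = 2 beta (k + u0) u^3 / 3 has the sign of k + u0 for u > 0.
   In case (i) this gives Phi (-u) < Phi u = Phi w, hence w < -u by monotonicity on (u0, 0);
   it also forces u < -u0, since Phi u < Phi u1 = Phi u0 < Phi (-u0), so that -u lies in (u0, 0).
   In case (ii) Phi w = Phi u < Phi (-u) gives w > -u in the same way; here -u > -k > u0
   automatically. *)
From Stdlib Require Import Reals Lra Psatz.
From Coquelicot Require Import Coquelicot.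
Open Scope R_scope.

Lemma strict_incr_reflect_lt (f : R -> R) (a b : R) :
  (forall x y, a < x -> x < y -> y < b -> f x < f y) ->
  forall x y, a < x < b -> a < y < b -> f x < f y -> x < y.
Proof.
  intros f_incr x y hx hy hfxy.
  destruct (Rtotal_order x y) as [| [-> | hyx]]; [assumption | lra |].
  specialize (f_incr y x ltac:(lra) hyx ltac:(lra)); lra.
Qed.

Lemma strict_decr_reflect_lt (f : R -> R) (a b : R) :
  (forall x y, a < x -> x < y -> y < b -> f y < f x) ->
  forall x y, a < x < b -> a < y < b -> f x < f y -> y < x.
Proof.
  intros f_decr x y hx hy hfxy.
  apply (strict_incr_reflect_lt (fun t => - f t) a b); [| assumption.. | lra].
  intros s t hs hst ht; specialize (f_decr s t hs hst ht); lra.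
Qed.

Lemma Phi_sub_Phi_opp (beta k u0 x : R) :
  Phi beta k u0 x - Phi beta k u0 (- x) = 2 * beta * (k + u0) / 3 * x ^ 3.
Proof. unfold Phi; field. Qed.

Section PhiShape.

Variables beta k u0 : R.
Hypothesis hbeta : 0 < beta.
Hypothesis hk : 0 < k.
Hypothesis hu0 : u0 < 0.

Lemma is_derive_Phi (x : R) :
  is_derive (Phi beta k u0) x (- beta * x * (x - k) * (x - u0)).
Proof. unfold Phi; auto_derive; [exact I | field]. Qed.

Lemma Phi_incr (x y : R) : 0 < x -> x < y -> y < k -> Phi beta k u0 x < Phi beta k u0 y.
Proof.
  apply (incr_function _ 0 k (fun t => - beta * t * (t - k) * (t - u0))).
  - intros t _ _; apply is_derive_Phi.
  - simpl; intros t ht0 htk.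
    assert (0 < beta * t * (k - t) * (t - u0)) by
      (repeat apply Rmult_lt_0_compat; lra).
    lra.
Qed.

Lemma Phi_decr (x y : R) : u0 < x -> x < y -> y < 0 -> Phi beta k u0 y < Phi beta k u0 x.
Proof.
  intros hx hxy hy.
  enough (- Phi beta k u0 x < - Phi beta k u0 y) by lra.
  apply (incr_function (fun t => - Phi beta k u0 t) u0 0
           (fun t => - (- beta * t * (t - k) * (t - u0)))); [| | assumption..].
  - intros t _ _; apply (is_derive_opp (Phi beta k u0)), is_derive_Phi.
  - simpl; intros t htu0 ht0.
    assert (0 < beta * (- t) * (k - t) * (t - u0)) by
      (repeat apply Rmult_lt_0_compat; lra).
    lra.
Qed.

Lemma Phi_opp_lt_Phi (x : R) : 0 < x -> 0 < k + u0 -> Phi beta k u0 (- x) < Phi beta k u0 x.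
Proof.
  intros hx hku0; pose proof (Phi_sub_Phi_opp beta k u0 x).
  assert (0 < 2 * beta * (k + u0) / 3 * x ^ 3) by
    (apply Rmult_lt_0_compat; [nra | apply pow_lt; lra]).
  lra.
Qed.

Lemma Phi_lt_Phi_opp (x : R) : 0 < x -> k + u0 < 0 -> Phi beta k u0 x < Phi beta k u0 (- x).
Proof.
  intros hx hku0; pose proof (Phi_sub_Phi_opp beta k u0 x).
  assert (0 < 2 * beta * (- (k + u0)) / 3 * x ^ 3) by
    (apply Rmult_lt_0_compat; [nra | apply pow_lt; lra]).
  lra.
Qed.

Lemma sum_lt0_of_Phi_eq (u1 u w : R) :
  - k < u0 -> 0 < u1 < k -> Phi beta k u0 u1 = Phi beta k u0 u0 ->
  0 < u < u1 -> u0 < w < 0 -> Phi beta k u0 w = Phi beta k u0 u -> u + w < 0.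
Proof.
  intros hku0 hu1 e1 hu hw e.
  assert (hu_lt : u < - u0).
  { apply (strict_incr_reflect_lt (Phi beta k u0) 0 k Phi_incr); [lra.. |].
    pose proof (Phi_incr u u1 ltac:(lra) ltac:(lra) ltac:(lra)).
    pose proof (Phi_opp_lt_Phi (- u0) ltac:(lra) ltac:(lra)) as h; rewrite Ropp_involutive in h.
    lra. }
  enough (w < - u) by lra.
  apply (strict_decr_reflect_lt (Phi beta k u0) u0 0 Phi_decr); [lra.. |].
  rewrite e; apply Phi_opp_lt_Phi; lra.
Qed.

Lemma sum_gt0_of_Phi_eq (u w : R) :
  u0 < - k -> 0 < u < k -> u0 < w < 0 -> Phi beta k u0 w = Phi beta k u0 u -> u + w > 0.
Proof.
  intros hku0 hu hw e.
  enough (- u < w) by lra.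
  apply (strict_decr_reflect_lt (Phi beta k u0) u0 0 Phi_decr); [lra.. |].
  rewrite e; apply Phi_lt_Phi_opp; lra.
Qed.

End PhiShape.

Theorem lemma3p5 (beta k u0 : R) (hbeta : 0 < beta) (hk : 0 < k) (hu0 : u0 < 0) :
  (* (i) case -k < u0 < 0 *)
  (-k < u0 ->
   forall u1 : R, 0 < u1 < k -> Phi beta k u0 u1 = Phi beta k u0 u0 ->
   forall u : R, 0 < u < u1 ->
   forall w : R, u0 < w < 0 -> Phi beta k u0 w = Phi beta k u0 u ->
   u + w < 0)
  /\
  (* (ii) case u0 < -k *)
  (u0 < -k ->
   forall w2 : R, u0 < w2 < 0 -> Phi beta k u0 w2 = Phi beta k u0 k ->
   forall u : R, 0 < u < k ->
   forall w : R, w2 < w < 0 -> Phi beta k u0 w = Phi beta k u0 u ->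
   u + w > 0).
Proof.
  split.
  - intros hku0 u1 hu1 e1 u hu w hw e.
    apply (sum_lt0_of_Phi_eq beta k u0) with (u1 := u1); assumption.
  - intros hku0 w2 hw2 _ u hu w hw e.
    apply (sum_gt0_of_Phi_eq beta k u0); try assumption; lra.
Qed.
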